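(* Let $X\in\mathcal{Y}$ and $T\in L(X)$. Suppose there exists $M\in L(X)$ with $[T,[T,M]]=0$ such that for every cyclic vector $u$ of $T$ and every $v\in X$ there exist $B,C\in\mathcal{C}(T)$ with $C[T,M]\neq 0$ and $Cv=Bu$. Then $T$ is not weakly supercyclic.
   Context: Scalars are $\mathbb{K}\in\{\mathbb{R},\mathbb{C}\}$. $L(X)$ denotes bounded linear operators on the Banach space $X$; $[T,S]=TS-ST$; $\mathcal{C}(T)=\{S\in L(X):[T,S]=0\}$. A vector $u$ is cyclic for $T$ if the span of $\{T^nu:n\in\mathbb{Z}_+\}$ is dense. $T$ is weakly supercyclic if for some $x$ the set $\{zT^nx:z\in\mathbb{K},n\in\mathbb{Z}_+\}$ is weakly dense in $X$. $\mathcal{Y}$ is the class of Banach spaces $X$ such that for every sequence $(x_n)_{n\in\mathbb{Z}_+}$ in $X$ with $n=O(\|x_n\|)$ as $n\to\infty$, the set $\{x_n:n\in\mathbb{Z}_+\}$ is weakly closed. *)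

From Stdlib Require Import Reals List.
Open Scope R_scope.

Record Scalars := {
  sK :> Type;
  sadd : sK -> sK -> sK;
  smul : sK -> sK -> sK;
  sopp : sK -> sK;
  s0 : sK;
  s1 : sK;
  sabs : sK -> R }.

Definition RScalars : Scalars :=
  {| sK := R; sadd := Rplus; smul := Rmult; sopp := Ropp; s0 := 0; s1 := 1;
     sabs := Rabs |}.

(* Complex numbers as pairs (re, im). *)
Definition CC := (R * R)%type.
Definition Cadd (z w : CC) : CC := (fst z + fst w, snd z + snd w).
Definition Cmul (z w : CC) : CC :=
  (fst z * fst w - snd z * snd w, fst z * snd w + snd z * fst w).
Definition Copp (z : CC) : CC := (- fst z, - snd z).
Definition Cabs (z : CC) : R := sqrt (fst z * fst z + snd z * snd z).

Definition CScalars : Scalars :=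
  {| sK := CC; sadd := Cadd; smul := Cmul; sopp := Copp; s0 := (0, 0);
     s1 := (1, 0); sabs := Cabs |}.

Definition Kof (b : bool) : Scalars := if b then CScalars else RScalars.

Record Banach (K : Scalars) := {
  bcar :> Type;
  bzero : bcar;
  badd : bcar -> bcar -> bcar;
  bopp : bcar -> bcar;
  bscal : sK K -> bcar -> bcar;
  bnorm : bcar -> R;
  badd_assoc : forall x y z, badd x (badd y z) = badd (badd x y) z;
  badd_comm : forall x y, badd x y = badd y x;
  badd_0 : forall x, badd x bzero = x;
  badd_opp : forall x, badd x (bopp x) = bzero;
  bscal_1 : forall x, bscal (s1 K) x = x;
  bscal_mul : forall a c x, bscal (smul K a c) x = bscal a (bscal c x);
  bscal_addK : forall a c x, bscal (sadd K a c) x = badd (bscal a x) (bscal c x);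
  bscal_addV : forall a x y, bscal a (badd x y) = badd (bscal a x) (bscal a y);
  bnorm_eq0 : forall x, bnorm x = 0 -> x = bzero;
  bnorm_scal : forall a x, bnorm (bscal a x) = sabs K a * bnorm x;
  bnorm_tri : forall x y, bnorm (badd x y) <= bnorm x + bnorm y;
  bcomplete : forall u : nat -> bcar,
    (forall eps, eps > 0 -> exists N, forall m n, (m >= N)%nat -> (n >= N)%nat ->
        bnorm (badd (u m) (bopp (u n))) < eps) ->
    exists l, forall eps, eps > 0 -> exists N, forall n, (n >= N)%nat ->
        bnorm (badd (u n) (bopp l)) < eps }.

Arguments bzero {K} _.
Arguments badd {K} _ _ _.
Arguments bopp {K} _ _.
Arguments bscal {K} _ _ _.
Arguments bnorm {K} _ _.

Definition bsub {K} {X : Banach K} (x y : X) : X := badd X x (bopp X y).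

Definition is_linear_op {K} {X : Banach K} (T : X -> X) : Prop :=
  (forall x y, T (badd X x y) = badd X (T x) (T y)) /\
  (forall a x, T (bscal X a x) = bscal X a (T x)).

Definition bounded_op {K} {X : Banach K} (T : X -> X) : Prop :=
  is_linear_op T /\ exists c, forall x, bnorm X (T x) <= c * bnorm X x.

Definition commutator {K} {X : Banach K} (T S : X -> X) : X -> X :=
  fun x => bsub (T (S x)) (S (T x)).

Definition is_zero_op {K} {X : Banach K} (T : X -> X) : Prop :=
  forall x, T x = bzero X.

Definition in_commutant {K} {X : Banach K} (T S : X -> X) : Prop :=
  bounded_op S /\ is_zero_op (commutator T S).

Definition dual_fun {K} {X : Banach K} (f : X -> sK K) : Prop :=
  (forall x y, f (badd X x y) = sadd K (f x) (f y)) /\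
  (forall a x, f (bscal X a x) = smul K a (f x)) /\
  (exists c, forall x, sabs K (f x) <= c * bnorm X x).

Definition weak_adherent {K} {X : Banach K} (A : X -> Prop) (x : X) : Prop :=
  forall (fs : list (X -> sK K)) (eps : R),
    Forall dual_fun fs -> eps > 0 ->
    exists a, A a /\
      Forall (fun f => sabs K (sadd K (f a) (sopp K (f x))) < eps) fs.

Definition weakly_closed {K} {X : Banach K} (A : X -> Prop) : Prop :=
  forall x, weak_adherent A x -> A x.

Definition weakly_dense {K} {X : Banach K} (A : X -> Prop) : Prop :=
  forall x, weak_adherent A x.

Fixpoint orbit_comb {K} {X : Banach K} (T : X -> X) (u : X) (c : nat -> sK K)
    (n : nat) : X :=
  match n with
  | O => bzero X
  | S m => badd X (orbit_comb T u c m) (bscal X (c m) (Nat.iter m T u))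
  end.

Definition cyclic_vector {K} {X : Banach K} (T : X -> X) (u : X) : Prop :=
  forall y eps, eps > 0 ->
    exists (n : nat) (c : nat -> sK K), bnorm X (bsub y (orbit_comb T u c n)) < eps.

Definition weakly_supercyclic {K} {X : Banach K} (T : X -> X) : Prop :=
  exists x, weakly_dense (fun y => exists (z : sK K) (n : nat), y = bscal X z (Nat.iter n T x)).

Definition in_class_Y {K} (X : Banach K) : Prop :=
  forall x : nat -> X,
    (exists (C : R) (N : nat), forall n, (n >= N)%nat -> INR n <= C * bnorm X (x n)) ->
    weakly_closed (fun y => exists n, y = x n).

(* Suppose the scaled orbit {z T^n x} is weakly dense.  Then x is cyclic
   (by Hahn-Banach separation), so applying the hypothesis to u = x and
   v = M x gives B, C with C (M x) = B x and C [T, M] <> 0.  Since A = [T, M]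
   commutes with T, T^n M = M T^n + n A T^(n-1), hence D = C A and
   R = T (B - C M) satisfy R y = n D y for y = z T^n x.  For a functional f
   with f (D p) = 1, the functionals g1 = f D and g2 = f R thus grow
   linearly along the orbit; weak density forces g2 to be proportional to
   g1, then the orbit to lie in a single line off the kernel of g1, and
   finally X to be one-dimensional.  But then [T, M] = 0, so C [T, M] = 0.
   The argument works in every Banach space. *)

From Stdlib Require Import Reals List Field Lra Psatz Classical ClassicalEpsilon ProofIrrelevance
  FunctionalExtensionality PropExtensionality.
From mathcomp Require classical_sets boolp.
Open Scope R_scope.

Notation "x +v y" := (badd _ x y) (at level 50, left associativity).
Notation "a *v x" := (bscal _ a x) (at level 40).

Section ScalarField.
Variable b : bool.
Notation K := (Kof b).

Lemma K_ring : ring_theory (s0 K) (s1 K) (sadd K) (smul K)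
  (fun x y => sadd K x (sopp K y)) (sopp K) (@eq K).
Proof.
  destruct b; constructor; simpl; intros;
    repeat match goal with p : CC |- _ => destruct p end;
    unfold Cadd, Cmul, Copp; simpl; try (f_equal; ring); ring.
Qed.

(* Multiplicative inverse on K (with the usual junk value at 0). *)
Definition Kinv : K -> K :=
  match b as b0 return sK (Kof b0) -> sK (Kof b0) with
  | true => fun z : CC =>
      (fst z / (fst z * fst z + snd z * snd z),
       - snd z / (fst z * fst z + snd z * snd z))
  | false => fun r : R => / r
  end.

Lemma C_normsq_neq0 (z : CC) : z <> (0, 0) -> fst z * fst z + snd z * snd z <> 0.
Proof.
  destruct z as [u v]; simpl; intros Hz E; apply Hz.
  assert (u = 0) by nra; assert (v = 0) by nra; subst; reflexivity.
Qed.

Lemma K_field : field_theory (s0 K) (s1 K) (sadd K) (smul K)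
  (fun x y => sadd K x (sopp K y)) (sopp K) (fun x y => smul K x (Kinv y))
  Kinv (@eq K).
Proof.
  constructor.
  - apply K_ring.
  - destruct b; simpl; [intro H; inversion H; lra | lra].
  - reflexivity.
  - unfold Kinv; destruct b; simpl; intros p Hp.
    + pose proof (C_normsq_neq0 p Hp) as Hn; destruct p as [u v]; simpl in *.
      unfold Cmul; simpl; f_equal; field; auto.
    + field; auto.
Qed.

Add Field K_field_inst : K_field.

Lemma K_one_neq0 : s1 K <> s0 K.
Proof. destruct b; simpl; [intro H; inversion H; lra | lra]. Qed.

Lemma K_two_neq0 : sadd K (s1 K) (s1 K) <> s0 K.
Proof. destruct b; simpl; [intro H; inversion H; lra | lra]. Qed.

Lemma K_mul_cancel_r (a c u : K) : u <> s0 K -> smul K a u = smul K c u -> a = c.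
Proof.
  intros Hu H.
  transitivity (smul K (smul K a u) (Kinv u)); [field; auto |].
  rewrite H; field; auto.
Qed.

Lemma sabs_nonneg (a : K) : 0 <= sabs K a.
Proof. destruct b; simpl; [apply sqrt_pos | apply Rabs_pos]. Qed.

Lemma sabs_0 : sabs K (s0 K) = 0.
Proof.
  destruct b; simpl; [| apply Rabs_R0].
  unfold Cabs; simpl; replace (0 * 0 + 0 * 0) with 0 by ring; apply sqrt_0.
Qed.

Lemma sabs_1 : sabs K (s1 K) = 1.
Proof.
  destruct b; simpl; [| apply Rabs_R1].
  unfold Cabs; simpl; replace (1 * 1 + 0 * 0) with 1 by ring; apply sqrt_1.
Qed.

Lemma sabs_eq0 (a : K) : sabs K a = 0 -> a = s0 K.
Proof.
  destruct b; simpl.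
  - destruct a as [u v]; unfold Cabs; simpl; intro H.
    apply sqrt_eq_0 in H; [| nra].
    assert (u = 0) by nra; assert (v = 0) by nra; subst; reflexivity.
  - intro H; destruct (Req_dec a 0) as [|Ha]; auto.
    exfalso; exact (Rabs_no_R0 a Ha H).
Qed.

Lemma sabs_pos (a : K) : a <> s0 K -> 0 < sabs K a.
Proof.
  intro H; pose proof (sabs_nonneg a).
  destruct (Req_dec (sabs K a) 0) as [E|E]; [apply sabs_eq0 in E; contradiction | lra].
Qed.

Lemma sabs_mul (a c : K) : sabs K (smul K a c) = sabs K a * sabs K c.
Proof.
  destruct b; simpl; [| apply Rabs_mult].
  destruct a as [u v]; destruct c as [p q]; unfold Cabs, Cmul; simpl.
  rewrite <- sqrt_mult by nra; f_equal; ring.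
Qed.

Lemma sabs_opp (a : K) : sabs K (sopp K a) = sabs K a.
Proof.
  destruct b; simpl; [| apply Rabs_Ropp].
  destruct a as [u v]; unfold Cabs, Copp; simpl; f_equal; ring.
Qed.

Lemma cauchy_schwarz_2 (u v p q : R) :
  u * p + v * q <= sqrt (u * u + v * v) * sqrt (p * p + q * q).
Proof.
  rewrite <- sqrt_mult by nra.
  destruct (Rle_dec (u * p + v * q) 0) as [Hn|Hn].
  - pose proof (sqrt_pos ((u * u + v * v) * (p * p + q * q))); lra.
  - apply Rsqr_incr_0_var; [| apply sqrt_pos]; unfold Rsqr.
    rewrite sqrt_sqrt by nra.
    pose proof (Rle_0_sqr (u * q - v * p)); unfold Rsqr in *; nra.
Qed.

Lemma sabs_tri (a c : K) : sabs K (sadd K a c) <= sabs K a + sabs K c.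
Proof.
  destruct b; simpl; [| apply Rabs_triang].
  destruct a as [u v]; destruct c as [p q]; unfold Cabs, Cadd; simpl.
  pose proof (sqrt_pos (u * u + v * v)); pose proof (sqrt_pos (p * p + q * q)).
  pose proof (cauchy_schwarz_2 u v p q).
  assert (Hsq : forall s t : R, 0 <= s * s + t * t).
  { intros s t; pose proof (Rle_0_sqr s); pose proof (Rle_0_sqr t); unfold Rsqr in *; lra. }
  apply Rsqr_incr_0_var; [| lra]; unfold Rsqr.
  rewrite sqrt_sqrt by apply Hsq.
  pose proof (sqrt_sqrt (u * u + v * v) (Hsq u v)).
  pose proof (sqrt_sqrt (p * p + q * q) (Hsq p q)).
  nra.
Qed.

Lemma sabs_sub_le (a c : K) : sabs K a <= sabs K (sadd K a (sopp K c)) + sabs K c.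
Proof.
  replace a with (sadd K (sadd K a (sopp K c)) c) at 1 by ring; apply sabs_tri.
Qed.

Definition ofR (r : R) : K :=
  match b as b0 return sK (Kof b0) with
  | true => (r, 0)
  | false => r
  end.

Definition re : K -> R :=
  match b as b0 return sK (Kof b0) -> R with
  | true => fun z : CC => fst z
  | false => fun r : R => r
  end.

Lemma ofR_add r s : ofR (r + s) = sadd K (ofR r) (ofR s).
Proof. unfold ofR; destruct b; simpl; auto; unfold Cadd; simpl; f_equal; ring. Qed.
Lemma ofR_mul r s : ofR (r * s) = smul K (ofR r) (ofR s).
Proof. unfold ofR; destruct b; simpl; auto; unfold Cmul; simpl; f_equal; ring. Qed.
Lemma ofR_opp r : ofR (- r) = sopp K (ofR r).
Proof. unfold ofR; destruct b; simpl; auto; unfold Copp; simpl; f_equal; ring. Qed.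
Lemma ofR_0 : ofR 0 = s0 K.
Proof. unfold ofR; destruct b; reflexivity. Qed.
Lemma ofR_1 : ofR 1 = s1 K.
Proof. unfold ofR; destruct b; reflexivity. Qed.
Lemma ofR_inj r s : ofR r = ofR s -> r = s.
Proof. unfold ofR; destruct b; simpl; auto; intro H; inversion H; auto. Qed.
Lemma sabs_ofR r : sabs K (ofR r) = Rabs r.
Proof.
  unfold ofR; destruct b; simpl; auto; unfold Cabs; simpl.
  replace (r * r + 0 * 0) with (Rsqr r) by (unfold Rsqr; ring).
  apply sqrt_Rsqr_abs.
Qed.

Lemma re_add a c : re (sadd K a c) = re a + re c.
Proof. unfold re; destruct b; simpl; auto. Qed.
Lemma re_ofR_mul r a : re (smul K (ofR r) a) = r * re a.
Proof. unfold re, ofR; destruct b; simpl; auto; destruct a; simpl; ring. Qed.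
Lemma re_0 : re (s0 K) = 0.
Proof. unfold re; destruct b; reflexivity. Qed.
Lemma re_le_sabs a : re a <= sabs K a.
Proof.
  unfold re; destruct b; simpl; [| apply Rle_abs].
  destruct a as [u v]; unfold Cabs; simpl.
  destruct (Rle_dec u 0); [pose proof (sqrt_pos (u * u + v * v)); lra |].
  apply Rsqr_incr_0_var; [| apply sqrt_pos]; unfold Rsqr.
  rewrite sqrt_sqrt by nra; nra.
Qed.
End ScalarField.

Section VectorAlgebra.
Variable b : bool.
Notation K := (Kof b).
Variable X : Banach K.
Notation "0v" := (bzero X).
Add Field K_field_va : (K_field b).

Lemma add0l (x : X) : 0v +v x = x.
Proof. rewrite badd_comm; apply badd_0. Qed.

Lemma add_cancel_l (x y z : X) : x +v y = x +v z -> y = z.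
Proof.
  intro H; rewrite <- (add0l y), <- (add0l z), <- (badd_opp _ X x),
    (badd_comm _ X x (bopp X x)), <- !badd_assoc, H; reflexivity.
Qed.

Lemma add_swap (a c d e : X) : (a +v c) +v (d +v e) = (a +v d) +v (c +v e).
Proof.
  rewrite !badd_assoc; f_equal; rewrite <- !badd_assoc; f_equal; apply badd_comm.
Qed.

Lemma scal_add (a c : K) (x : X) : a *v x +v c *v x = sadd K a c *v x.
Proof. rewrite bscal_addK; reflexivity. Qed.

Lemma scal_scal (a c : K) (x : X) : a *v (c *v x) = smul K a c *v x.
Proof. rewrite bscal_mul; reflexivity. Qed.

Lemma scal0 (x : X) : s0 K *v x = 0v.
Proof.
  apply (add_cancel_l (s0 K *v x)); rewrite badd_0, scal_add; f_equal; ring.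
Qed.

Lemma scal_zero (a : K) : a *v 0v = 0v.
Proof.
  apply (add_cancel_l (a *v 0v)); rewrite badd_0, <- bscal_addV, badd_0; reflexivity.
Qed.

Lemma opp_scal (x : X) : bopp X x = sopp K (s1 K) *v x.
Proof.
  apply (add_cancel_l x); rewrite badd_opp.
  rewrite <- (bscal_1 _ X x) at 1; rewrite scal_add.
  replace (sadd K (s1 K) (sopp K (s1 K))) with (s0 K) by ring.
  symmetry; apply scal0.
Qed.

Lemma add_neg (x : X) : x +v sopp K (s1 K) *v x = 0v.
Proof. rewrite <- opp_scal; apply badd_opp. Qed.

Lemma sub_eq0 (x y : X) : bsub x y = 0v -> x = y.
Proof.
  unfold bsub; intro H; apply (add_cancel_l (bopp X y)).
  rewrite badd_comm, H, badd_comm, badd_opp; reflexivity.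
Qed.

Lemma sub_diag (x : X) : bsub x x = 0v.
Proof. apply badd_opp. Qed.

Lemma sub_zero (x : X) : bsub x 0v = x.
Proof. unfold bsub; rewrite opp_scal, scal_zero, badd_0; reflexivity. Qed.

Lemma add_sub_cancel (x y : X) : bsub (x +v y) x = y.
Proof.
  unfold bsub; rewrite (badd_comm _ X x y), <- badd_assoc, badd_opp, badd_0; reflexivity.
Qed.

Lemma sub_add_cancel (x y : X) : y +v bsub x y = x.
Proof.
  unfold bsub; rewrite (badd_comm _ X x), badd_assoc, badd_opp, add0l; reflexivity.
Qed.

Lemma norm0 : bnorm X 0v = 0.
Proof. rewrite <- (scal0 0v), bnorm_scal, sabs_0; ring. Qed.

Lemma norm_opp (x : X) : bnorm X (bopp X x) = bnorm X x.
Proof. rewrite opp_scal, bnorm_scal, sabs_opp, sabs_1; ring. Qed.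

Lemma norm_nonneg (x : X) : 0 <= bnorm X x.
Proof.
  pose proof (bnorm_tri _ X x (bopp X x)) as H.
  rewrite badd_opp, norm0, norm_opp in H; lra.
Qed.

Lemma norm_pos (x : X) : x <> 0v -> 0 < bnorm X x.
Proof.
  intro H; pose proof (norm_nonneg x).
  destruct (Req_dec (bnorm X x) 0) as [E|E]; [apply bnorm_eq0 in E; contradiction | lra].
Qed.

Lemma ofR_scal_1 (x : X) : ofR b 1 *v x = x.
Proof. rewrite ofR_1; apply bscal_1. Qed.
Lemma ofR_scal_0 (x : X) : ofR b 0 *v x = 0v.
Proof. rewrite ofR_0; apply scal0. Qed.
Lemma ofR_scal_add r s (x : X) : ofR b r *v x +v ofR b s *v x = ofR b (r + s) *v x.
Proof. rewrite ofR_add; apply scal_add. Qed.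
Lemma ofR_scal_scal r s (x : X) : ofR b r *v (ofR b s *v x) = ofR b (r * s) *v x.
Proof. rewrite ofR_mul; apply scal_scal. Qed.
Lemma ofR_scal_opp (x : X) : bopp X x = ofR b (-1) *v x.
Proof.
  replace (-1) with (- (1)) by ring; rewrite ofR_opp, ofR_1; apply opp_scal.
Qed.
Lemma ofR_add_neg (x : X) : x +v ofR b (-1) *v x = 0v.
Proof. rewrite <- ofR_scal_opp; apply badd_opp. Qed.
End VectorAlgebra.

(* A partial linear functional is represented by its graph G : X * R -> Prop;
   we extend it by one dimension at a time and conclude with Zorn's lemma. *)
Section RealHahnBanach.
Variable b : bool.
Notation K := (Kof b).
Variable X : Banach K.
Notation "0v" := (bzero X).
Notation io := (ofR b).
Variable k : R.
Hypothesis k_nonneg : 0 <= k.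
Notation p x := (k * bnorm X x).

Lemma p_scal_pos (r : R) (x : X) : 0 <= r -> p (io r *v x) = r * p x.
Proof. intro Hr; rewrite bnorm_scal, sabs_ofR, Rabs_right by lra; ring. Qed.

Record dominated_graph (G : X * R -> Prop) : Prop := {
  graph_fun : forall x a a', G (x, a) -> G (x, a') -> a = a';
  graph_add : forall x a y c, G (x, a) -> G (y, c) -> G (x +v y, a + c);
  graph_scal : forall r x a, G (x, a) -> G (io r *v x, r * a);
  graph_dom : forall x a, G (x, a) -> a <= p x }.

Definition incl (G H : X * R -> Prop) : Prop := forall xa, G xa -> H xa.

Section OneStepExtension.
Variable G : X * R -> Prop.
Hypothesis G_dom : dominated_graph G.
Hypothesis G_0 : G (0v, 0).
Variable z : X.
Hypothesis z_new : ~ exists a, G (z, a).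

(* The classical choice of the value m at z: sup of the lower bounds is at
   most the inf of the upper bounds, by sublinearity of p. *)
Lemma extension_value : exists m,
  (forall w c, G (w, c) -> c - p (w +v io (-1) *v z) <= m) /\
  (forall w c, G (w, c) -> m <= p (w +v z) - c).
Proof.
  assert (Gap : forall w c w' c', G (w, c) -> G (w', c') ->
            c - p (w +v io (-1) *v z) <= p (w' +v z) - c').
  { intros w c w' c' H1 H2.
    pose proof (graph_dom _ G_dom _ _ (graph_add _ G_dom _ _ _ _ H1 H2)) as Hd.
    pose proof (bnorm_tri _ X (w +v io (-1) *v z) (w' +v z)) as Ht.
    rewrite add_swap, (badd_comm _ X (io (-1) *v z) z), ofR_add_neg, badd_0 in Ht.
    nra. }
  set (E := fun r => exists w c, G (w, c) /\ r = c - p (w +v io (-1) *v z)).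
  assert (E_bound : bound E).
  { exists (p (0v +v z) - 0); intros r [w [c [H ->]]]; apply Gap; auto. }
  assert (E_ne : exists r, E r) by (eexists; exists 0v, 0; eauto).
  destruct (completeness E E_bound E_ne) as [m [Hub Hlub]].
  exists m; split.
  - intros w c H; apply Hub; exists w, c; auto.
  - intros w c H; apply Hlub; intros r [w' [c' [H' ->]]]; apply Gap; auto.
Qed.

Variable m : R.
Hypothesis m_lower : forall w c, G (w, c) -> c - p (w +v io (-1) *v z) <= m.
Hypothesis m_upper : forall w c, G (w, c) -> m <= p (w +v z) - c.

(* The bounds on m, rescaled by s > 0 using homogeneity of G and p. *)
Lemma extension_value_scaled w c s : G (w, c) -> 0 < s ->
  c + s * m <= p (w +v io s *v z) /\ c - s * m <= p (w +v io (- s) *v z).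
Proof.
  intros H Hs.
  pose proof (graph_scal _ G_dom (/ s) _ _ H) as Hs'.
  assert (Back : forall y, io s *v (io (/ s) *v w +v y) = w +v io s *v y).
  { intro y; rewrite bscal_addV, ofR_scal_scal.
    replace (s * / s) with 1 by (field; lra); rewrite ofR_scal_1; reflexivity. }
  assert (Up : p (w +v io s *v z) = s * p (io (/ s) *v w +v z)).
  { rewrite <- Back, p_scal_pos by lra; reflexivity. }
  assert (Lo : p (w +v io (- s) *v z) = s * p (io (/ s) *v w +v io (-1) *v z)).
  { rewrite <- p_scal_pos, Back, ofR_scal_scal by lra.
    replace (s * -1) with (- s) by ring; reflexivity. }
  pose proof (m_upper _ _ Hs') as U; pose proof (m_lower _ _ Hs') as L.
  set (P1 := p (io (/ s) *v w +v z)) in *.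
  set (P2 := p (io (/ s) *v w +v io (-1) *v z)) in *.
  replace c with (s * (/ s * c)) by (field; lra).
  rewrite Up, Lo; split; nra.
Qed.

Definition ext_graph : X * R -> Prop := fun xa =>
  exists w c t, G (w, c) /\ fst xa = w +v io t *v z /\ snd xa = c + t * m.

Lemma ext_graph_fun x a a' : ext_graph (x, a) -> ext_graph (x, a') -> a = a'.
Proof.
  intros [w1 [c1 [t1 [H1 [E1 F1]]]]] [w2 [c2 [t2 [H2 [E2 F2]]]]]; simpl in *.
  subst a a'; rewrite E1 in E2.
  destruct (Req_dec t1 t2) as [<-|Ht].
  - assert (w1 = w2) as <-.
    { apply (add_cancel_l _ X (io t1 *v z)); rewrite !(badd_comm _ X (io t1 *v z)); exact E2. }
    rewrite (graph_fun _ G_dom _ _ _ H1 H2); reflexivity.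
  - (* otherwise z = (w2 - w1) / (t1 - t2) would lie in the domain of G *)
    exfalso; apply z_new.
    assert (Eq : io (t1 - t2) *v z = w2 +v io (-1) *v w1).
    { assert (HH := f_equal (fun v => v +v (io (-1) *v w1 +v io (- t2) *v z)) E2).
      simpl in HH.
      rewrite (add_swap _ _ w1 (io t1 *v z)), (add_swap _ _ w2 (io t2 *v z)),
        ofR_add_neg, !ofR_scal_add, add0l in HH.
      replace (t2 + - t2) with 0 in HH by ring; rewrite ofR_scal_0, badd_0 in HH.
      replace (t1 + - t2) with (t1 - t2) in HH by ring; exact HH. }
    exists (/ (t1 - t2) * (c2 + -1 * c1)).
    replace z with (io (/ (t1 - t2)) *v (w2 +v io (-1) *v w1)).
    + apply (graph_scal _ G_dom), (graph_add _ G_dom); [| apply (graph_scal _ G_dom)]; auto.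
    + rewrite <- Eq, ofR_scal_scal.
      replace (/ (t1 - t2) * (t1 - t2)) with 1 by (field; lra); apply ofR_scal_1.
Qed.

Lemma ext_graph_dominated : dominated_graph ext_graph.
Proof.
  constructor.
  - exact ext_graph_fun.
  - intros x a y c [w1 [c1 [t1 [H1 [E1 F1]]]]] [w2 [c2 [t2 [H2 [E2 F2]]]]]; simpl in *.
    exists (w1 +v w2), (c1 + c2), (t1 + t2); simpl.
    split; [apply (graph_add _ G_dom); auto |].
    rewrite E1, E2, add_swap, ofR_scal_add; split; [reflexivity | subst; ring].
  - intros r x a [w [c [t [H [E F]]]]]; simpl in *.
    exists (io r *v w), (r * c), (r * t); simpl.
    split; [apply (graph_scal _ G_dom); auto |].
    rewrite E, bscal_addV, ofR_scal_scal; split; [reflexivity | subst; ring].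
  - intros x a [w [c [t [H [E F]]]]]; simpl in *; subst x a.
    destruct (Rtotal_order t 0) as [Hn|[->|Hp]].
    + destruct (extension_value_scaled w c (- t) H ltac:(lra)) as [_ Hd].
      rewrite Ropp_involutive in Hd; lra.
    + rewrite ofR_scal_0, badd_0, Rmult_0_l, Rplus_0_r; exact (graph_dom _ G_dom _ _ H).
    + exact (proj1 (extension_value_scaled w c t H Hp)).
Qed.

Lemma ext_graph_extends : incl G ext_graph.
Proof.
  intros [x a] H; exists x, a, 0; simpl.
  rewrite ofR_scal_0, badd_0; repeat split; auto; ring.
Qed.

Lemma ext_graph_at_z : ext_graph (z, m).
Proof.
  exists 0v, 0, 1; simpl; rewrite ofR_scal_1, add0l; repeat split; auto; ring.
Qed.
End OneStepExtension.

Lemma one_step_extension (G : X * R -> Prop) (z : X) :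
  dominated_graph G -> G (0v, 0) -> ~ (exists a, G (z, a)) ->
  exists G', dominated_graph G' /\ incl G G' /\ exists a, G' (z, a).
Proof.
  intros G_dom G_0 z_new.
  destruct (extension_value G G_dom G_0 z) as [m [m_lower m_upper]].
  exists (ext_graph G z m); split; [| split].
  - exact (ext_graph_dominated G G_dom z z_new m m_lower m_upper).
  - apply ext_graph_extends.
  - exists m; apply ext_graph_at_z; exact G_0.
Qed.

Lemma chain_union_dominated (Fam : (X * R -> Prop) -> Prop) :
  (forall H, Fam H -> dominated_graph H) ->
  (forall H H', Fam H -> Fam H' -> incl H H' \/ incl H' H) ->
  dominated_graph (fun xa => exists H, Fam H /\ H xa).
Proof.
  intros Fam_dom Fam_chain.
  assert (Common : forall xa ya, (exists H, Fam H /\ H xa) -> (exists H, Fam H /\ H ya) ->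
            exists H, Fam H /\ H xa /\ H ya).
  { intros xa ya [H [FH Hx]] [H' [FH' Hy]].
    destruct (Fam_chain H H' FH FH') as [I|I]; [exists H' | exists H]; auto. }
  constructor.
  - intros x a a' Ha Ha'; destruct (Common _ _ Ha Ha') as [H [FH [H1 H2]]].
    exact (graph_fun _ (Fam_dom H FH) _ _ _ H1 H2).
  - intros x a y c Ha Hc; destruct (Common _ _ Ha Hc) as [H [FH [H1 H2]]].
    exists H; split; [exact FH | exact (graph_add _ (Fam_dom H FH) _ _ _ _ H1 H2)].
  - intros r x a [H [FH H1]].
    exists H; split; [exact FH | exact (graph_scal _ (Fam_dom H FH) _ _ _ H1)].
  - intros x a [H [FH H1]]; exact (graph_dom _ (Fam_dom H FH) _ _ H1).
Qed.

Lemma maximal_dominated_extension (G0 : X * R -> Prop) :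
  dominated_graph G0 ->
  exists G, dominated_graph G /\ incl G0 G /\
    forall G', dominated_graph G' -> incl G G' -> incl G' G.
Proof.
  intros G0_dom.
  set (T := {G : X * R -> Prop | dominated_graph G /\ incl G0 G}).
  set (Rel := fun s t : T => boolp.asbool (incl (proj1_sig s) (proj1_sig t))).
  assert (RelP : forall s t, Rel s t = true <-> incl (proj1_sig s) (proj1_sig t)).
  { intros s t; symmetry; apply Bool.reflect_iff, boolp.asboolP. }
  destruct (@classical_sets.Zorn T Rel) as [[G [G_dom G0_G]] G_max].
  - intro s; apply RelP; intros xa h; exact h.
  - intros r s t Hrs Hst; apply RelP; apply RelP in Hrs; apply RelP in Hst.
    intros xa h; auto.
  - intros [G HG] [G' HG'] H1 H2; apply RelP in H1; apply RelP in H2; simpl in *.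
    apply subset_eq_compat, functional_extensionality; intro xa.
    apply propositional_extensionality; split; auto.
  - intros A A_chain.
    set (Fam := fun H => H = G0 \/ exists s, A s /\ H = proj1_sig s).
    assert (Fam_dom : forall H, Fam H -> dominated_graph H).
    { intros H [->|[s [_ ->]]]; [exact G0_dom | exact (proj1 (proj2_sig s))]. }
    assert (Fam_chain : forall H H', Fam H -> Fam H' -> incl H H' \/ incl H' H).
    { intros H H' [->|[s [As ->]]] [->|[t [At ->]]].
      - left; intros xa h; exact h.
      - left; exact (proj2 (proj2_sig t)).
      - right; exact (proj2 (proj2_sig s)).
      - destruct (A_chain s t As At) as [I|I]; apply RelP in I; auto. }
    assert (U_ext : incl G0 (fun xa => exists H, Fam H /\ H xa)).
    { intros xa h; exists G0; split; [left | ]; auto. }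
    exists (exist (fun H => dominated_graph H /\ incl G0 H) _
              (conj (chain_union_dominated Fam Fam_dom Fam_chain) U_ext)).
    intros s As; apply RelP; intros xa h; exists (proj1_sig s); split; [right; exists s | ]; auto.
  - exists G; split; [exact G_dom | split; [exact G0_G |]].
    intros G' G'_dom G_G'.
    set (s' := exist (fun H => dominated_graph H /\ incl G0 H) G'
                 (conj G'_dom (fun xa h => G_G' xa (G0_G xa h)))).
    assert (E := G_max s' (proj2 (RelP (exist _ G (conj G_dom G0_G)) s') G_G')).
    apply (f_equal (@proj1_sig _ _)) in E; simpl in E; rewrite E; intros xa h; exact h.
Qed.

Theorem hahn_banach_real (G0 : X * R -> Prop) :
  dominated_graph G0 -> G0 (0v, 0) ->
  exists F : X -> R,
    (forall x y, F (x +v y) = F x + F y) /\ (forall r x, F (io r *v x) = r * F x) /\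
    (forall x, F x <= k * bnorm X x) /\ (forall x a, G0 (x, a) -> F x = a).
Proof.
  intros G0_dom G0_0.
  destruct (maximal_dominated_extension G0 G0_dom) as [G [G_dom [G0_G G_max]]].
  assert (G_total : forall z, exists a, G (z, a)).
  { intro z; apply NNPP; intro z_new.
    destruct (one_step_extension G z G_dom (G0_G _ G0_0) z_new) as [G' [G'_dom [G_G' [a Ha]]]].
    apply z_new; exists a; exact (G_max G' G'_dom G_G' _ Ha). }
  set (F := fun z => proj1_sig (constructive_indefinite_description _ (G_total z))).
  assert (HF : forall z, G (z, F z)).
  { intro z; exact (proj2_sig (constructive_indefinite_description _ (G_total z))). }
  exists F; split; [| split; [| split]].
  - intros x y; apply (graph_fun _ G_dom (x +v y)); [apply HF | apply (graph_add _ G_dom); apply HF].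
  - intros r x; apply (graph_fun _ G_dom (io r *v x)); [apply HF | apply (graph_scal _ G_dom); apply HF].
  - intro x; apply (graph_dom _ G_dom), HF.
  - intros x a H; apply (graph_fun _ G_dom x); [apply HF | apply G0_G; exact H].
Qed.
End RealHahnBanach.

Definition subspace {K} {X : Banach K} (V : X -> Prop) : Prop :=
  V (bzero X) /\ (forall q q', V q -> V q' -> V (q +v q')) /\
  (forall a q, V q -> V (a *v q)).

Section RealSeparation.
Variable b : bool.
Notation K := (Kof b).
Variable X : Banach K.
Notation "0v" := (bzero X).
Notation io := (ofR b).
Add Field K_field_sep : (K_field b).
Variable V : X -> Prop.
Hypothesis V_sub : subspace V.
Variable y : X.
Variable d : R.
Hypothesis d_pos : 0 < d.
Hypothesis V_far : forall q, V q -> d <= bnorm X (bsub y q).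

Definition distance_graph : X * R -> Prop := fun wa =>
  exists q l, V q /\ fst wa = q +v l *v y /\ snd wa = re b l.

(* The decomposition q + l y (q in V) is unique, since y is not in V. *)
Lemma decomposition_unique q l q' l' : V q -> V q' ->
  q +v l *v y = q' +v l' *v y -> l = l'.
Proof.
  destruct V_sub as [_ [Vadd Vscal]]; intros Hq Hq' E.
  apply NNPP; intro Hl.
  assert (Hne : sadd K l (sopp K l') <> s0 K).
  { intro E'; apply Hl; replace l with (sadd K (sadd K l (sopp K l')) l') by ring.
    rewrite E'; ring. }
  (* otherwise y = (q' - q) / (l - l') would lie in V, at distance 0 from y *)
  assert (Eq : sadd K l (sopp K l') *v y = q' +v sopp K (s1 K) *v q).
  { assert (HH := f_equal (fun v => v +v (sopp K (s1 K) *v q +v sopp K l' *v y)) E).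
    simpl in HH; rewrite (add_swap _ _ q), (add_swap _ _ q'), add_neg, !scal_add in HH.
    replace (sadd K l' (sopp K l')) with (s0 K) in HH by ring.
    rewrite scal0, badd_0, add0l in HH; exact HH. }
  assert (Vy : V y).
  { replace y with (Kinv b (sadd K l (sopp K l')) *v (q' +v sopp K (s1 K) *v q)).
    - apply Vscal, Vadd, Vscal; auto.
    - rewrite <- Eq, scal_scal.
      replace (smul K (Kinv b (sadd K l (sopp K l'))) (sadd K l (sopp K l'))) with (s1 K)
        by (field; auto).
      apply bscal_1. }
  pose proof (V_far y Vy) as H; rewrite sub_diag, norm0 in H; lra.
Qed.

(* ||q + l y|| >= |l| d, since q + l y = l (y - q'') with q'' = - q / l in V. *)
Lemma distance_bound q l : V q -> sabs K l * d <= bnorm X (q +v l *v y).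
Proof.
  destruct V_sub as [_ [_ Vscal]]; intro Hq.
  destruct (classic (l = s0 K)) as [->|Hl].
  - rewrite sabs_0, Rmult_0_l; apply norm_nonneg.
  - set (q'' := sopp K (Kinv b l) *v q).
    assert (Eq : l *v bsub y q'' = q +v l *v y).
    { unfold q'', bsub; rewrite opp_scal, scal_scal, bscal_addV, scal_scal, badd_comm.
      f_equal; replace (smul K l (smul K (sopp K (s1 K)) (sopp K (Kinv b l)))) with (s1 K)
        by (field; auto).
      apply bscal_1. }
    rewrite <- Eq, bnorm_scal; apply Rmult_le_compat_l; [apply sabs_nonneg |].
    apply V_far, Vscal, Hq.
Qed.

Lemma distance_graph_dominated : dominated_graph b X (/ d) distance_graph.
Proof.
  destruct V_sub as [_ [Vadd Vscal]].
  constructor.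
  - intros x a a' [q [l [Hq [E1 F1]]]] [q' [l' [Hq' [E2 F2]]]]; simpl in *; subst.
    rewrite (decomposition_unique q l q' l' Hq Hq' E2); reflexivity.
  - intros x a x' a' [q [l [Hq [E1 F1]]]] [q' [l' [Hq' [E2 F2]]]]; simpl in *.
    exists (q +v q'), (sadd K l l'); simpl.
    rewrite E1, E2, F1, F2, add_swap, scal_add, re_add; auto.
  - intros r x a [q [l [Hq [E1 F1]]]]; simpl in *.
    exists (io r *v q), (smul K (io r) l); simpl.
    rewrite E1, F1, bscal_addV, scal_scal, re_ofR_mul; auto.
  - intros x a [q [l [Hq [E1 F1]]]]; simpl in *; subst.
    pose proof (distance_bound q l Hq); pose proof (re_le_sabs b l).
    apply Rle_trans with (sabs K l); [assumption |].
    replace (sabs K l) with (/ d * (sabs K l * d)) at 1 by (field; lra).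
    apply Rmult_le_compat_l; [apply Rlt_le, Rinv_0_lt_compat, d_pos | assumption].
Qed.

Lemma separation_real : exists F : X -> R,
  (forall x x', F (x +v x') = F x + F x') /\ (forall r x, F (io r *v x) = r * F x) /\
  (forall x, F x <= / d * bnorm X x) /\ (forall q, V q -> F q = 0) /\
  (forall l, F (l *v y) = re b l).
Proof.
  destruct V_sub as [V0 _].
  assert (G0_0 : distance_graph (0v, 0)).
  { exists 0v, (s0 K); simpl; rewrite scal0, badd_0, re_0; auto. }
  destruct (hahn_banach_real b X (/ d) ltac:(apply Rlt_le, Rinv_0_lt_compat, d_pos)
              distance_graph distance_graph_dominated G0_0) as [F [Fadd [Fscal [Fdom Fext]]]].
  exists F; repeat split; auto.
  - intros q Hq; apply Fext; exists q, (s0 K); simpl; rewrite scal0, badd_0, re_0; auto.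
  - intro l; apply Fext; exists 0v, l; simpl; rewrite add0l; auto.
Qed.
End RealSeparation.

(* A real-linear functional F on a complex space, dominated by k ||.||, is the
   real part of the complex-linear functional x |-> F x - i F (i x), which is
   dominated by k ||.|| in modulus. *)
Section Complexification.
Variable X : Banach (Kof true).
Definition ci : sK (Kof true) := (0, 1).
Variable F : X -> R.
Hypothesis F_add : forall x x', F (x +v x') = F x + F x'.
Hypothesis F_scal : forall r x, F (ofR true r *v x) = r * F x.
Variable k : R.
Hypothesis k_nonneg : 0 <= k.
Hypothesis F_dom : forall x, F x <= k * bnorm X x.

Definition complexify (x : X) : CC := (F x, - F (ci *v x)).

Lemma scal_decompose (c : Kof true) (x : X) :
  c *v x = ofR true (fst c) *v x +v ofR true (snd c) *v (ci *v x).
Proof.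
  rewrite scal_scal, scal_add; f_equal; destruct c as [u v]; unfold ci; simpl.
  unfold Cadd, Cmul; simpl; f_equal; ring.
Qed.

Lemma complexify_add x x' : complexify (x +v x') = Cadd (complexify x) (complexify x').
Proof. unfold complexify, Cadd; simpl; rewrite F_add, bscal_addV, F_add; f_equal; ring. Qed.

Lemma complexify_scal (a : Kof true) x : complexify (a *v x) = Cmul a (complexify x).
Proof.
  unfold complexify.
  rewrite scal_scal, (scal_decompose (smul _ ci a) x), (scal_decompose a x), !F_add, !F_scal.
  destruct a as [u v]; unfold Cmul; simpl; f_equal; ring.
Qed.

Lemma complexify_bound x : Cabs (complexify x) <= k * bnorm X x.
Proof.
  pose proof (norm_nonneg _ X x).
  unfold Cabs, complexify; cbn [fst snd].
  set (u := F x); set (v := - F (ci *v x)); set (r := sqrt (u * u + v * v)).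
  assert (Hsq : r * r = u * u + v * v).
  { apply sqrt_sqrt; pose proof (Rle_0_sqr u); pose proof (Rle_0_sqr v); unfold Rsqr in *; lra. }
  destruct (Req_dec r 0) as [E|E]; [rewrite E; nra |].
  (* rotate x by the unimodular mu = conj(f x) / |f x|, so that f (mu x) = |f x| *)
  set (mu := (u / r, - v / r) : Kof true).
  assert (Fmu : F (mu *v x) = r).
  { change (F (mu *v x)) with (fst (complexify (mu *v x))).
    rewrite complexify_scal; unfold mu, complexify, Cmul; simpl.
    change (- F (ci *v x)) with v; fold u.
    replace (u / r * u - - v / r * v) with ((u * u + v * v) / r) by (field; exact E).
    rewrite <- Hsq; field; exact E. }
  assert (Hmu : Cabs mu = 1).
  { unfold Cabs, mu; simpl.
    replace (u / r * (u / r) + - v / r * (- v / r)) with ((u * u + v * v) / (r * r))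
      by (field; exact E).
    rewrite <- Hsq; replace (r * r / (r * r)) with 1 by (field; exact E); apply sqrt_1. }
  pose proof (F_dom (mu *v x)) as Hd; rewrite Fmu, bnorm_scal in Hd.
  simpl in Hd; rewrite Hmu, Rmult_1_l in Hd; exact Hd.
Qed.

Lemma complexify_dual : dual_fun complexify.
Proof.
  split; [exact complexify_add | split; [exact complexify_scal |]].
  exists k; exact complexify_bound.
Qed.
End Complexification.

Theorem separation (b : bool) (X : Banach (Kof b)) (V : X -> Prop) (y : X) (d : R) :
  subspace V -> 0 < d -> (forall q, V q -> d <= bnorm X (bsub y q)) ->
  exists f, dual_fun f /\ (forall q, V q -> f q = s0 (Kof b)) /\ f y = s1 (Kof b).
Proof.
  intros V_sub d_pos V_far.
  assert (k_nonneg : 0 <= / d) by (apply Rlt_le, Rinv_0_lt_compat, d_pos).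
  destruct (separation_real b X V V_sub y d d_pos V_far)
    as [F [Fadd [Fscal [Fdom [FV Fy]]]]].
  destruct b.
  - exists (complexify X F); split; [exact (complexify_dual X F Fadd Fscal _ k_nonneg Fdom) |].
    destruct V_sub as [_ [_ Vscal]]; split.
    + intros q Hq; unfold complexify; simpl; rewrite !FV by auto; f_equal; ring.
    + pose proof (Fy (s1 _)) as Fy1; pose proof (Fy ci) as Fyi.
      rewrite bscal_1 in Fy1; unfold complexify; rewrite Fy1, Fyi; simpl; f_equal; ring.
  - exists F; split; [split; [exact Fadd | split; [exact Fscal |]] | split; [exact FV |]].
    + exists (/ d); intro x; simpl; unfold Rabs; destruct (Rcase_abs (F x)); [| apply Fdom].
      pose proof (Fdom (ofR false (-1) *v x)) as H.
      rewrite Fscal, <- ofR_scal_opp, norm_opp in H; change (Kof false) with RScalars in H; lra.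
    + specialize (Fy (s1 _)); rewrite bscal_1 in Fy; exact Fy.
Qed.

Section OperatorsAndFunctionals.
Variable b : bool.
Notation K := (Kof b).
Variable X : Banach K.
Notation "0v" := (bzero X).
Add Field K_field_op : (K_field b).

Lemma lin_add (S : X -> X) : bounded_op S -> forall x y, S (x +v y) = S x +v S y.
Proof. intros [[H _] _]; exact H. Qed.
Lemma lin_scal (S : X -> X) : bounded_op S -> forall a x, S (a *v x) = a *v S x.
Proof. intros [[_ H] _]; exact H. Qed.
Lemma lin_zero (S : X -> X) : bounded_op S -> S 0v = 0v.
Proof. intro H; rewrite <- (scal0 _ X 0v) at 1; rewrite (lin_scal S H); apply scal0. Qed.

Lemma bound_nonneg (S : X -> X) : bounded_op S ->
  exists c, 0 <= c /\ forall x, bnorm X (S x) <= c * bnorm X x.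
Proof.
  intros [_ [c Hc]]; exists (Rmax c 0); split; [apply Rmax_r |]; intro x.
  eapply Rle_trans; [apply Hc |].
  apply Rmult_le_compat_r; [apply norm_nonneg | apply Rmax_l].
Qed.

Lemma bounded_comp (S U : X -> X) :
  bounded_op S -> bounded_op U -> bounded_op (fun x => S (U x)).
Proof.
  intros HS HU; split; [split |].
  - intros x y; rewrite (lin_add U HU), (lin_add S HS); reflexivity.
  - intros a x; rewrite (lin_scal U HU), (lin_scal S HS); reflexivity.
  - destruct (bound_nonneg S HS) as [c [c0 Hc]]; destruct (bound_nonneg U HU) as [c' [c0' Hc']].
    exists (c * c'); intro x; eapply Rle_trans; [apply Hc |].
    rewrite Rmult_assoc; apply Rmult_le_compat_l; auto.
Qed.

Lemma bounded_sub (S U : X -> X) :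
  bounded_op S -> bounded_op U -> bounded_op (fun x => bsub (S x) (U x)).
Proof.
  intros HS HU; split; [split |].
  - intros x y; rewrite (lin_add U HU), (lin_add S HS); unfold bsub.
    rewrite !opp_scal, bscal_addV; apply add_swap.
  - intros a x; rewrite (lin_scal U HU), (lin_scal S HS); unfold bsub.
    rewrite !opp_scal, bscal_addV, !scal_scal; do 2 f_equal; ring.
  - destruct (bound_nonneg S HS) as [c [c0 Hc]]; destruct (bound_nonneg U HU) as [c' [c0' Hc']].
    exists (c + c'); intro x; unfold bsub; eapply Rle_trans; [apply bnorm_tri |].
    rewrite norm_opp; specialize (Hc x); specialize (Hc' x); lra.
Qed.

Lemma iter_comm (S U : X -> X) : (forall x, S (U x) = U (S x)) ->
  forall n x, Nat.iter n S (U x) = U (Nat.iter n S x).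
Proof. intros H n; induction n; intro x; simpl; [| rewrite IHn, H]; reflexivity. Qed.

Lemma dual_add (f : X -> K) : dual_fun f -> forall x y, f (x +v y) = sadd K (f x) (f y).
Proof. intros [H _]; exact H. Qed.
Lemma dual_scal (f : X -> K) : dual_fun f -> forall a x, f (a *v x) = smul K a (f x).
Proof. intros [_ [H _]]; exact H. Qed.
Lemma dual_zero (f : X -> K) : dual_fun f -> f 0v = s0 K.
Proof. intro H; rewrite <- (scal0 _ X 0v), (dual_scal f H); ring. Qed.

Lemma dual_comp (f : X -> K) (S : X -> X) :
  dual_fun f -> bounded_op S -> dual_fun (fun x => f (S x)).
Proof.
  intros Hf HS; split; [| split].
  - intros x y; rewrite (lin_add S HS), (dual_add f Hf); reflexivity.
  - intros a x; rewrite (lin_scal S HS), (dual_scal f Hf); reflexivity.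
  - destruct Hf as [_ [_ [c Hc]]]; destruct (bound_nonneg S HS) as [c' [c0' Hc']].
    exists (Rmax c 0 * c'); intro x; eapply Rle_trans; [apply Hc |].
    apply Rle_trans with (Rmax c 0 * bnorm X (S x)).
    + apply Rmult_le_compat_r; [apply norm_nonneg | apply Rmax_l].
    + rewrite Rmult_assoc; apply Rmult_le_compat_l; [apply Rmax_r | auto].
Qed.

Lemma dual_comb (f g : X -> K) (l : K) :
  dual_fun f -> dual_fun g -> dual_fun (fun x => sadd K (f x) (smul K l (g x))).
Proof.
  intros Hf Hg; split; [| split].
  - intros x y; rewrite (dual_add f Hf), (dual_add g Hg); ring.
  - intros a x; rewrite (dual_scal f Hf), (dual_scal g Hg); ring.
  - destruct Hf as [_ [_ [c Hc]]]; destruct Hg as [_ [_ [c' Hc']]].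
    exists (Rmax c 0 + sabs K l * Rmax c' 0); intro x.
    eapply Rle_trans; [apply sabs_tri |]; rewrite sabs_mul.
    pose proof (norm_nonneg _ X x); pose proof (sabs_nonneg b l).
    assert (sabs K (f x) <= Rmax c 0 * bnorm X x).
    { eapply Rle_trans; [apply Hc |]; apply Rmult_le_compat_r; auto; apply Rmax_l. }
    assert (sabs K (g x) <= Rmax c' 0 * bnorm X x).
    { eapply Rle_trans; [apply Hc' |]; apply Rmult_le_compat_r; auto; apply Rmax_l. }
    assert (sabs K l * sabs K (g x) <= sabs K l * (Rmax c' 0 * bnorm X x))
      by (apply Rmult_le_compat_l; auto).
    nra.
Qed.

Lemma functional_at_nonzero (w : X) : w <> 0v -> exists f, dual_fun f /\ f w = s1 K.
Proof.
  intro Hw.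
  assert (zero_sub : subspace (fun q : X => q = 0v)).
  { split; [reflexivity | split]; [intros q q' -> ->; apply badd_0 | intros a q ->; apply scal_zero]. }
  destruct (separation b X _ w (bnorm X w) zero_sub (norm_pos _ X w Hw)) as [f [Hf [_ Fw]]].
  - intros q ->; rewrite sub_zero; lra.
  - exists f; auto.
Qed.

Lemma common_nonroot (f g : X -> K) (p q : X) : dual_fun f -> dual_fun g ->
  f p <> s0 K -> g q <> s0 K -> exists P, f P <> s0 K /\ g P <> s0 K.
Proof.
  intros Hf Hg Hp Hq.
  destruct (classic (g p = s0 K)) as [Gp|Gp]; [| exists p; auto].
  destruct (classic (f (p +v q) = s0 K)) as [Fpq|Fpq].
  - (* then f q = - f p, and P = p + 2 q works *)
    exists (p +v sadd K (s1 K) (s1 K) *v q).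
    rewrite (dual_add f Hf), (dual_add g Hg), (dual_scal f Hf), (dual_scal g Hg), Gp.
    rewrite (dual_add f Hf) in Fpq; split; intro E.
    + apply Hp.
      transitivity (sadd K (smul K (sadd K (s1 K) (s1 K)) (sadd K (f p) (f q)))
                      (sopp K (sadd K (f p) (smul K (sadd K (s1 K) (s1 K)) (f q)))));
        [ring | rewrite Fpq, E; ring].
    + apply Hq, (K_mul_cancel_r b _ _ _ (K_two_neq0 b)).
      transitivity (sadd K (s0 K) (smul K (sadd K (s1 K) (s1 K)) (g q))); [ring |].
      rewrite E; ring.
  - exists (p +v q); split; auto.
    rewrite (dual_add g Hg), Gp; replace (sadd K (s0 K) (g q)) with (g q) by ring; exact Hq.
Qed.

Lemma commutator_bounded (S U : X -> X) :
  bounded_op S -> bounded_op U -> bounded_op (commutator S U).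
Proof.
  intros HS HU; unfold commutator; apply bounded_sub; apply bounded_comp; auto.
Qed.

Lemma commute_of_commutator (S U : X -> X) :
  is_zero_op (commutator S U) -> forall v, S (U v) = U (S v).
Proof. intros H v; apply sub_eq0, H. Qed.


Lemma one_dimensional_commutator (e : X) (S U : X -> X) :
  (forall v, exists c, v = c *v e) -> bounded_op S -> bounded_op U ->
  is_zero_op (commutator S U).
Proof.
  intros Line HS HU v.
  destruct (Line (S e)) as [al Hal]; destruct (Line (U e)) as [mu Hmu].
  assert (Ce : commutator S U e = 0v).
  { unfold commutator; rewrite Hmu, (lin_scal S HS), Hal, (lin_scal U HU), Hmu, !scal_scal.
    replace (smul K mu al) with (smul K al mu) by ring; apply sub_diag. }
  destruct (Line v) as [c ->].
  rewrite (lin_scal _ (commutator_bounded S U HS HU)), Ce; apply scal_zero.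
Qed.

Lemma separate_from_line (e v : X) : e <> 0v -> (forall c, v <> c *v e) ->
  exists h, dual_fun h /\ h e = s0 K /\ h v <> s0 K.
Proof.
  intros He Hv.
  destruct (functional_at_nonzero e He) as [f0 [Hf0 F0e]].
  set (v' := v +v sopp K (f0 v) *v e).
  assert (Hv' : v' <> 0v).
  { intro E; apply (Hv (f0 v)).
    assert (HH := f_equal (fun w => w +v f0 v *v e) E); simpl in HH.
    unfold v' in HH; rewrite <- badd_assoc, scal_add, add0l in HH.
    replace (sadd K (sopp K (f0 v)) (f0 v)) with (s0 K) in HH by ring.
    rewrite scal0, badd_0 in HH; exact HH. }
  destruct (functional_at_nonzero v' Hv') as [h0 [Hh0 H0v]].
  exists (fun w => sadd K (h0 w) (smul K (sopp K (h0 e)) (f0 w))).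
  split; [apply dual_comb; auto | split; [rewrite F0e; ring |]].
  (* h v = h v' = 1 since h vanishes at e and f0 v' = 0 *)
  assert (f0v' : f0 v' = s0 K).
  { unfold v'; rewrite (dual_add _ Hf0), (dual_scal _ Hf0), F0e; ring. }
  replace v with (v' +v f0 v *v e).
  - rewrite (dual_add _ Hh0), (dual_add _ Hf0), (dual_scal _ Hh0), (dual_scal _ Hf0), H0v, f0v', F0e.
    replace (sadd K (sadd K (s1 K) (smul K (f0 v) (h0 e)))
               (smul K (sopp K (h0 e)) (sadd K (s0 K) (smul K (f0 v) (s1 K)))))
      with (s1 K) by ring.
    apply K_one_neq0.
  - unfold v'; rewrite <- badd_assoc, scal_add.
    replace (sadd K (sopp K (f0 v)) (f0 v)) with (s0 K) by ring; rewrite scal0; apply badd_0.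
Qed.

Lemma weakly_dense_two (A : X -> Prop) (g1 g2 : X -> K) (eps : R) :
  weakly_dense A -> dual_fun g1 -> dual_fun g2 -> eps > 0 ->
  forall P, exists a, A a /\ sabs K (sadd K (g1 a) (sopp K (g1 P))) < eps /\
                      sabs K (sadd K (g2 a) (sopp K (g2 P))) < eps.
Proof.
  intros HA H1 H2 He P; destruct (HA P (g1 :: g2 :: nil) eps) as [a [Ha HF]]; auto.
  inversion HF; subst; inversion H4; subst; exists a; auto.
Qed.
End OperatorsAndFunctionals.

(* The linear span of an orbit, and the fact that a weakly supercyclic
   vector is cyclic: otherwise the span of its orbit misses a ball, and a
   separating functional contradicts weak density of the scaled orbit. *)
Section OrbitSpan.
Variable b : bool.
Notation K := (Kof b).
Variable X : Banach K.
Notation "0v" := (bzero X).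
Variable T : X -> X.
Variable x : X.
Notation comb := (orbit_comb T x).
Add Field K_field_orb : (K_field b).

Lemma comb_add c c' n : comb c n +v comb c' n = comb (fun j => sadd K (c j) (c' j)) n.
Proof. induction n; simpl; [apply badd_0 | rewrite add_swap, IHn, scal_add; reflexivity]. Qed.

Lemma comb_scal a c n : a *v comb c n = comb (fun j => smul K a (c j)) n.
Proof. induction n; simpl; [apply scal_zero | rewrite bscal_addV, IHn, scal_scal; reflexivity]. Qed.

Lemma comb_ext c c' n : (forall j, (j < n)%nat -> c j = c' j) -> comb c n = comb c' n.
Proof. induction n; intro H; simpl; [reflexivity | rewrite IHn, H; auto]. Qed.

Lemma comb_zero c n : (forall j, (j < n)%nat -> c j = s0 K) -> comb c n = 0v.
Proof. induction n; intro H; simpl; [reflexivity | rewrite IHn, H, scal0; auto; apply badd_0]. Qed.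

Lemma comb_pad c n m : (forall j, (j >= n)%nat -> c j = s0 K) -> comb c (n + m) = comb c n.
Proof.
  intro H; induction m; [rewrite Nat.add_0_r; reflexivity |].
  rewrite Nat.add_succ_r; simpl; rewrite IHm, H, scal0, badd_0; [reflexivity | lia].
Qed.

Lemma comb_lengthen c n m : exists c', comb c n = comb c' (n + m).
Proof.
  exists (fun j => if (j <? n)%nat then c j else s0 K).
  rewrite comb_pad.
  - apply comb_ext; intros j Hj; apply Nat.ltb_lt in Hj; rewrite Hj; reflexivity.
  - intros j Hj; destruct (j <? n)%nat eqn:E; [apply Nat.ltb_lt in E; lia | reflexivity].
Qed.

Definition orbit_span (q : X) : Prop := exists n c, q = comb c n.

Lemma orbit_span_subspace : subspace orbit_span.
Proof.
  split; [| split].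
  - exists O, (fun _ => s0 K); reflexivity.
  - intros q q' [n [c ->]] [n' [c' ->]].
    destruct (comb_lengthen c n n') as [c1 ->].
    destruct (comb_lengthen c' n' n) as [c1' ->].
    rewrite (Nat.add_comm n' n), comb_add; eexists; eexists; reflexivity.
  - intros a q [n [c ->]]; exists n, (fun j => smul K a (c j)); apply comb_scal.
Qed.

Lemma orbit_span_orbit z n : orbit_span (z *v Nat.iter n T x).
Proof.
  exists (S n), (fun j => if (j =? n)%nat then z else s0 K); simpl.
  rewrite comb_zero, add0l, Nat.eqb_refl; [reflexivity |].
  intros j Hj; destruct (j =? n)%nat eqn:E; [apply Nat.eqb_eq in E; lia | reflexivity].
Qed.

Lemma weakly_dense_orbit_cyclic :
  weakly_dense (fun y => exists (z : K) (n : nat), y = z *v Nat.iter n T x) ->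
  cyclic_vector T x.
Proof.
  intros Hw y eps Heps; apply NNPP; intro N.
  assert (far : forall q, orbit_span q -> eps <= bnorm X (bsub y q)).
  { intros q [n [c ->]]; apply Rnot_lt_le; intro L; apply N; exists n, c; exact L. }
  destruct (separation b X orbit_span y eps orbit_span_subspace Heps far) as [f [Hf [FV Fy]]].
  destruct (weakly_dense_two b X _ f f (/ 2) Hw Hf Hf ltac:(lra) y) as [a [[z [n ->]] [H1 _]]].
  rewrite FV, Fy in H1 by apply orbit_span_orbit.
  replace (sadd K (s0 K) (sopp K (s1 K))) with (sopp K (s1 K)) in H1 by ring.
  rewrite sabs_opp, sabs_1 in H1; lra.
Qed.
End OrbitSpan.

(* Let A = [T, M] commute with T, let
   B, C commute with T and C (M x) = B x.  Then T^n M = M T^n + n A T^(n-1)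
   gives, with D = C A and R = T (B - C M), the identity
   R (z T^n x) = n D (z T^n x) along the scaled orbit of x. *)
Section CommutatorIdentity.
Variable b : bool.
Notation K := (Kof b).
Variable X : Banach K.
Notation io := (ofR b).
Add Field K_field_ci : (K_field b).
Variable T M B C : X -> X.
Hypothesis T_bd : bounded_op T.
Hypothesis M_bd : bounded_op M.
Hypothesis TA_comm : is_zero_op (commutator T (commutator T M)).
Hypothesis B_comm : in_commutant T B.
Hypothesis C_comm : in_commutant T C.
Notation A := (commutator T M).

Lemma A_bounded : bounded_op A.
Proof. exact (commutator_bounded _ _ T M T_bd M_bd). Qed.

Lemma T_M_swap v : T (M v) = M (T v) +v A v.
Proof. symmetry; apply sub_add_cancel. Qed.

Lemma iter_T_M n v :
  Nat.iter (S n) T (M v) = M (Nat.iter (S n) T v) +v io (INR (S n)) *v Nat.iter n T (A v).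
Proof.
  induction n.
  - simpl; rewrite ofR_scal_1; apply T_M_swap.
  - change (Nat.iter (S (S n)) T (M v)) with (T (Nat.iter (S n) T (M v))); rewrite IHn.
    rewrite (lin_add _ _ T T_bd), (lin_scal _ _ T T_bd), T_M_swap.
    rewrite <- (iter_comm _ _ T A (commute_of_commutator _ _ T A TA_comm) (S n) v).
    change (T (Nat.iter n T (A v))) with (Nat.iter (S n) T (A v)).
    change (T (Nat.iter (S n) T v)) with (Nat.iter (S (S n)) T v).
    rewrite <- badd_assoc; f_equal.
    rewrite <- (ofR_scal_1 _ _ (Nat.iter (S n) T (A v))) at 1; rewrite ofR_scal_add.
    rewrite (S_INR (S n)); do 2 f_equal; ring.
Qed.

Definition Dop (v : X) : X := C (A v).
Definition Rop (v : X) : X := T (bsub (B v) (C (M v))).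

Lemma Dop_bounded : bounded_op Dop.
Proof. exact (bounded_comp _ _ C A (proj1 C_comm) A_bounded). Qed.

Lemma Rop_bounded : bounded_op Rop.
Proof.
  unfold Rop; apply bounded_comp; [exact T_bd |]; apply bounded_sub; [exact (proj1 B_comm) |].
  exact (bounded_comp _ _ C M (proj1 C_comm) M_bd).
Qed.

Variable x : X.
Hypothesis CM_B : C (M x) = B x.

Lemma orbit_identity_iter n : Rop (Nat.iter n T x) = io (INR n) *v Dop (Nat.iter n T x).
Proof.
  pose proof (commute_of_commutator _ _ T B (proj2 B_comm)) as TB.
  pose proof (commute_of_commutator _ _ T C (proj2 C_comm)) as TC.
  unfold Rop, Dop; destruct n as [|n].
  - simpl; rewrite CM_B, sub_diag, (lin_zero _ _ T T_bd), ofR_scal_0; reflexivity.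
  - (* B T^(n+1) x = T^(n+1) C M x = C M T^(n+1) x + (n+1) C T^n A x *)
    assert (E : B (Nat.iter (S n) T x) =
                C (M (Nat.iter (S n) T x)) +v io (INR (S n)) *v C (Nat.iter n T (A x))).
    { rewrite <- (iter_comm _ _ T B TB), <- CM_B, (iter_comm _ _ T C TC), iter_T_M,
        (lin_add _ _ C (proj1 C_comm)), (lin_scal _ _ C (proj1 C_comm)); reflexivity. }
    rewrite E, add_sub_cancel, (lin_scal _ _ T T_bd), TC; do 2 f_equal.
    change (T (Nat.iter n T (A x))) with (Nat.iter (S n) T (A x)).
    apply iter_comm, commute_of_commutator, TA_comm.
Qed.

Lemma orbit_identity z n :
  Rop (z *v Nat.iter n T x) = io (INR n) *v Dop (z *v Nat.iter n T x).
Proof.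
  rewrite (lin_scal _ _ Rop Rop_bounded), (lin_scal _ _ Dop Dop_bounded),
    orbit_identity_iter, !scal_scal; f_equal; ring.
Qed.
End CommutatorIdentity.

(* If the scaled orbit of x is
   weakly dense and two functionals satisfy g2 (z T^n x) = n g1 (z T^n x)
   with g1 <> 0, then X is one-dimensional: g2 must be proportional to g1
   (an integer multiple n g1 cannot be near 1/2 while g1 is near 1), which
   pins down n wherever g1 does not vanish, so the orbit is essentially a
   single line, and a weakly dense set cannot lie in a line otherwise. *)
Section LinearScalars.
Variable b : bool.
Notation K := (Kof b).
Add Field K_field_ls : (K_field b).

Lemma no_multiple_near_half (n : nat) (u : K) :
  sabs K (sadd K u (sopp K (s1 K))) < / 4 ->
  / 4 <= sabs K (sadd K (smul K (ofR b (INR n)) u) (sopp K (ofR b (/ 2)))).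
Proof.
  intro Hu.
  assert (Hhalf : sabs K (ofR b (/ 2)) = / 2) by (rewrite sabs_ofR; apply Rabs_right; lra).
  destruct n as [|n].
  - simpl; rewrite ofR_0.
    replace (sadd K (smul K (s0 K) u) (sopp K (ofR b (/ 2)))) with (sopp K (ofR b (/ 2)))
      by ring.
    rewrite sabs_opp, Hhalf; lra.
  - (* |u| >= 3/4, hence |(n+1) u| >= 3/4 *)
    pose proof (sabs_sub_le b (s1 K) u) as L1.
    replace (sadd K (s1 K) (sopp K u)) with (sopp K (sadd K u (sopp K (s1 K)))) in L1 by ring.
    rewrite sabs_opp, sabs_1 in L1.
    pose proof (sabs_sub_le b (smul K (ofR b (INR (S n))) u) (ofR b (/ 2))) as L2.
    rewrite Hhalf, sabs_mul, sabs_ofR, Rabs_right in L2 by (apply Rle_ge, pos_INR).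
    pose proof (S_INR n); pose proof (pos_INR n); pose proof (sabs_nonneg b u).
    assert (INR (S n) * sabs K u >= sabs K u) by nra.
    lra.
Qed.
End LinearScalars.

Section WeaklyDenseOrbit.
Variable b : bool.
Notation K := (Kof b).
Variable X : Banach K.
Notation "0v" := (bzero X).
Add Field K_field_wdo : (K_field b).
Variable T : X -> X.
Variable x : X.
Definition scaled_orbit (y : X) : Prop := exists (z : K) (n : nat), y = z *v Nat.iter n T x.
Hypothesis orbit_dense : weakly_dense scaled_orbit.

Lemma orbit_nonvanishing (g : X -> K) (P : X) : dual_fun g -> g P <> s0 K ->
  exists z n, g (z *v Nat.iter n T x) <> s0 K.
Proof.
  intros Hg HP; pose proof (sabs_pos b _ HP).
  destruct (weakly_dense_two b X _ g g (sabs K (g P)) orbit_dense Hg Hg ltac:(lra) P)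
    as [a [[z [n ->]] [H1 _]]].
  exists z, n; intro E; rewrite E in H1.
  replace (sadd K (s0 K) (sopp K (g P))) with (sopp K (g P)) in H1 by ring.
  rewrite sabs_opp in H1; lra.
Qed.

Lemma prescribe_values (g1 g2 : X -> K) (p q : X) (a : K) :
  dual_fun g1 -> dual_fun g2 -> g1 p = s1 K -> g2 q <> smul K (g2 p) (g1 q) ->
  exists P, g1 P = s1 K /\ g2 P = a.
Proof.
  intros H1 H2 g1p Hq.
  set (det := sadd K (g2 q) (sopp K (smul K (g2 p) (g1 q)))).
  assert (Hdet : det <> s0 K).
  { intro E; apply Hq.
    replace (g2 q) with (sadd K det (smul K (g2 p) (g1 q))) by (unfold det; ring).
    rewrite E; ring. }
  set (t := smul K (sadd K a (sopp K (g2 p))) (Kinv b det)).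
  exists (sadd K (s1 K) (sopp K (smul K t (g1 q))) *v p +v t *v q).
  rewrite (dual_add _ _ _ H1), (dual_add _ _ _ H2), !(dual_scal _ _ _ H1), !(dual_scal _ _ _ H2), g1p.
  split; [ring |].
  replace (g2 q) with (sadd K det (smul K (g2 p) (g1 q))) by (unfold det; ring).
  unfold t; field; exact Hdet.
Qed.

Lemma orbit_in_line (g : X -> K) (P e : X) : dual_fun g -> g P <> s0 K ->
  (forall y, scaled_orbit y -> g y <> s0 K -> exists c, y = c *v e) ->
  forall v, exists c, v = c *v e.
Proof.
  intros Hg HP Hline v; apply NNPP; intro Hv.
  assert (Hv' : forall c, v <> c *v e) by (intros c E; apply Hv; exists c; exact E).
  assert (He : e <> 0v).
  { intro E; destruct (orbit_nonvanishing g P Hg HP) as [z [n Hz]].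
    destruct (Hline _ (ex_intro _ z (ex_intro _ n eq_refl)) Hz) as [c Hc].
    apply Hz; rewrite Hc, E, scal_zero; apply dual_zero, Hg. }
  destruct (separate_from_line b X e v He Hv') as [h [Hh [he hv]]].
  destruct (common_nonroot b X g h P v Hg Hh HP hv) as [Q [gQ hQ]].
  pose proof (sabs_pos b _ gQ) as Pos1; pose proof (sabs_pos b _ hQ) as Pos2.
  pose proof (Rmin_l (sabs K (g Q)) (sabs K (h Q))) as Le1.
  pose proof (Rmin_r (sabs K (g Q)) (sabs K (h Q))) as Le2.
  destruct (weakly_dense_two b X _ g h (Rmin (sabs K (g Q)) (sabs K (h Q))) orbit_dense Hg Hh ltac:(apply Rmin_pos; lra) Q)
    as [a [Ha [H1 H2]]].
  (* a is g-close to Q, so g a <> 0 and a lies on the line, where h vanishes *)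
  assert (ga : g a <> s0 K).
  { intro E; rewrite E in H1.
    replace (sadd K (s0 K) (sopp K (g Q))) with (sopp K (g Q)) in H1 by ring.
    rewrite sabs_opp in H1; lra. }
  destruct (Hline a Ha ga) as [c ->].
  rewrite (dual_scal _ _ _ Hh), he in H2.
  replace (sadd K (smul K c (s0 K)) (sopp K (h Q))) with (sopp K (h Q)) in H2 by ring.
  rewrite sabs_opp in H2; lra.
Qed.

Variables g1 g2 : X -> K.
Hypothesis g1_dual : dual_fun g1.
Hypothesis g2_dual : dual_fun g2.
Hypothesis linear_growth :
  forall z n, g2 (z *v Nat.iter n T x) = smul K (ofR b (INR n)) (g1 (z *v Nat.iter n T x)).

(* g2 is a multiple of g1: otherwise pick P with g1 P = 1, g2 P = 1/2. *)
Lemma growth_proportional (p : X) : g1 p = s1 K -> forall q, g2 q = smul K (g2 p) (g1 q).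
Proof.
  intros g1p q; apply NNPP; intro Hq.
  destruct (prescribe_values g1 g2 p q (ofR b (/ 2)) g1_dual g2_dual g1p Hq) as [P [G1 G2]].
  destruct (weakly_dense_two b X _ g1 g2 (/ 4) orbit_dense g1_dual g2_dual ltac:(lra) P)
    as [a [[z [n ->]] [H1 H2]]].
  rewrite linear_growth, G2 in H2; rewrite G1 in H1.
  pose proof (no_multiple_near_half b n _ H1); lra.
Qed.

Lemma growth_index_unique (p : X) : g1 p = s1 K -> forall z n z' n',
  g1 (z *v Nat.iter n T x) <> s0 K -> g1 (z' *v Nat.iter n' T x) <> s0 K -> n = n'.
Proof.
  intros g1p.
  assert (Index : forall z n, g1 (z *v Nat.iter n T x) <> s0 K -> ofR b (INR n) = g2 p).
  { intros z n Hz; apply (K_mul_cancel_r b _ _ _ Hz).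
    rewrite <- linear_growth; apply growth_proportional; exact g1p. }
  intros z n z' n' Hz Hz'; apply INR_eq, (ofR_inj b).
  rewrite (Index z n Hz), (Index z' n' Hz'); reflexivity.
Qed.

Theorem linear_growth_one_dimensional (p : X) : g1 p = s1 K ->
  exists e : X, forall v : X, exists c : K, v = c *v e.
Proof.
  intro g1p.
  assert (g1p_nz : g1 p <> s0 K) by (rewrite g1p; apply K_one_neq0).
  destruct (orbit_nonvanishing g1 p g1_dual g1p_nz) as [z0 [n0 H0]].
  exists (Nat.iter n0 T x); apply (orbit_in_line g1 p _ g1_dual g1p_nz).
  intros y [z [n ->]] Hy.
  rewrite (growth_index_unique p g1p z n z0 n0 Hy H0); exists z; reflexivity.
Qed.
End WeaklyDenseOrbit.

Theorem corollary1p5 (b : bool) (X : Banach (Kof b)) (T : X -> X) :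
  in_class_Y X ->
  bounded_op T ->
  (exists M : X -> X,
      bounded_op M /\
      is_zero_op (commutator T (commutator T M)) /\
      (forall u v : X, cyclic_vector T u ->
         exists B C : X -> X,
           in_commutant T B /\ in_commutant T C /\
           ~ is_zero_op (fun x => C (commutator T M x)) /\
           C v = B u)) ->
  ~ weakly_supercyclic T.
Proof.
  intros _ T_bd [M [M_bd [TA_comm Hyp]]] [x x_dense].
  destruct (Hyp x (M x) (weakly_dense_orbit_cyclic b X T x x_dense))
    as [B [C [B_comm [C_comm [D_nz CM_B]]]]].
  destruct (not_all_ex_not _ _ D_nz) as [p Dp].
  destruct (functional_at_nonzero b X _ Dp) as [f [f_dual f_Dp]].
  set (D := Dop b X T M C); set (R := Rop b X T M B C).
  pose proof (Dop_bounded b X T M C T_bd M_bd C_comm) as D_bd.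
  pose proof (Rop_bounded b X T M B C T_bd M_bd B_comm C_comm) as R_bd.
  assert (growth : forall z n, f (R (z *v Nat.iter n T x)) =
                               smul _ (ofR b (INR n)) (f (D (z *v Nat.iter n T x)))).
  { intros z n; unfold R, D.
    rewrite (orbit_identity b X T M B C T_bd M_bd TA_comm B_comm C_comm x CM_B).
    apply (dual_scal _ _ _ f_dual). }
  destruct (linear_growth_one_dimensional b X T x x_dense (fun v => f (D v)) (fun v => f (R v))
              (dual_comp _ _ f D f_dual D_bd) (dual_comp _ _ f R f_dual R_bd) growth p f_Dp)
    as [e Line].
  (* but on a one-dimensional space [T, M] = 0, hence D = 0 *)
  apply Dp; rewrite (one_dimensional_commutator b X e T M Line T_bd M_bd p).
  exact (lin_zero _ _ C (proj1 C_comm)).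
Qed.
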